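(* Let $(X,d)$ be a complete $\mathrm{CAT}(0)$-space, $f:X\to\mathbb{R}$ a lower semi-continuous quasi-convex function, $x_0\in X$ and $(\tau_k)_{k\in\mathbb N}$ a sequence of positive numbers. Suppose a sequence $(x^k)_{k\ge0}$ exists with $x^0=x_0$ and $x^k\in\mathcal J^f_{\tau_k}(x^{k-1})$ for all $k\in\mathbb N$. Then: (i) $d(x^l,x^m)\le d(x^k,x^m)$ for all $0\le k<l<m$; (ii) setting $T_0:=0$, $T_k:=\tau_1+\dots+\tau_k$ and $\ell:=\lim_k T_k\in(0,\infty]$, the curve $\xi:[0,\ell)\to X$ defined by $\xi(t):=\gamma_{x^{k-1}x^k}\big((t-T_{k-1})/\tau_k\big)$ for $t\in[T_{k-1},T_k)$, $k\in\mathbb N$, is self-contracted.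
   Context: A metric space is geodesic if any two points $x,y$ are joined by a curve $\gamma:[0,1]\to X$ with $\gamma(0)=x$, $\gamma(1)=y$, $d(\gamma(s),\gamma(t))=|t-s|d(x,y)$ (a minimal geodesic). A geodesic metric space $(X,d)$ is a $\mathrm{CAT}(0)$-space if for all $x,y,z\in X$ and every minimal geodesic $\gamma$ from $y$ to $z$, $d^2(x,\gamma(s))\le(1-s)d^2(x,y)+sd^2(x,z)-(1-s)sd^2(y,z)$ for all $s\in[0,1]$; then minimal geodesics are unique, denoted $\gamma_{xy}$. $f$ is quasi-convex if $f(\gamma_{xy}(s))\le\max\{f(x),f(y)\}$ for all $x,y\in X$, $s\in(0,1)$. For $\tau>0$, $\mathcal J^f_\tau(x):=\{z\in X: f(z)+d^2(x,z)/(2\tau)=\inf_{w\in X}\{f(w)+d^2(x,w)/(2\tau)\}\}$. A map $\xi:[0,\ell)\to X$ is self-contracted if $d(\xi(t_2),\xi(t_3))\le d(\xi(t_1),\xi(t_3))$ for all $0\le t_1\le t_2\le t_3<\ell$. *)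

From Stdlib Require Import Reals Lra.
Open Scope R_scope.

Section MetricDefs.
Context {X : Type} (d : X -> X -> R).

Definition is_metric : Prop :=
  (forall x y, 0 <= d x y) /\
  (forall x y, d x y = 0 <-> x = y) /\
  (forall x y, d x y = d y x) /\
  (forall x y z, d x z <= d x y + d y z).

(* gamma : [0,1] -> X is a minimal geodesic from x to y
   (only its values on [0,1] matter) *)
Definition is_min_geodesic (x y : X) (gamma : R -> X) : Prop :=
  gamma 0 = x /\ gamma 1 = y /\
  forall s t, 0 <= s <= 1 -> 0 <= t <= 1 ->
    d (gamma s) (gamma t) = Rabs (t - s) * d x y.

Definition is_geodesic_space : Prop :=
  forall x y, exists gamma, is_min_geodesic x y gamma.

Definition is_CAT0 : Prop :=
  is_geodesic_space /\
  forall x y z gamma, is_min_geodesic y z gamma ->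
    forall s, 0 <= s <= 1 ->
      (d x (gamma s))^2 <= (1 - s) * (d x y)^2 + s * (d x z)^2
                           - (1 - s) * s * (d y z)^2.

Definition is_complete : Prop :=
  forall u : nat -> X,
    (forall eps, 0 < eps -> exists N, forall n m, (N <= n)%nat -> (N <= m)%nat ->
        d (u n) (u m) < eps) ->
    exists l, forall eps, 0 < eps -> exists N, forall n, (N <= n)%nat -> d (u n) l < eps.

Definition lower_semicontinuous (f : X -> R) : Prop :=
  forall x eps, 0 < eps -> exists delta, 0 < delta /\
    forall y, d x y < delta -> f x - eps < f y.

(* quasi-convexity along (the, unique in CAT(0)) minimal geodesics *)
Definition quasi_convex (f : X -> R) : Prop :=
  forall x y gamma, is_min_geodesic x y gamma ->
    forall s, 0 < s < 1 -> f (gamma s) <= Rmax (f x) (f y).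

Definition in_J (f : X -> R) (tau : R) (x z : X) : Prop :=
  forall w, f z + (d x z)^2 / (2 * tau) <= f w + (d x w)^2 / (2 * tau).

End MetricDefs.

Fixpoint Tsum (tau : nat -> R) (k : nat) : R :=
  match k with
  | O => 0
  | S k' => Tsum tau k' + tau (S k')
  end.

(* t ∈ [0, ell) where ell = lim_k T_k ∈ (0, +oo] *)
Definition in_dom (tau : nat -> R) (t : R) : Prop :=
  0 <= t /\ exists k, t < Tsum tau k.

Definition self_contracted {X : Type} (d : X -> X -> R) (tau : nat -> R)
  (xi : R -> X) : Prop :=
  forall t1 t2 t3, 0 <= t1 -> t1 <= t2 -> t2 <= t3 -> in_dom tau t3 ->
    d (xi t2) (xi t3) <= d (xi t1) (xi t3).

From Stdlib Require Import Reals Lra Psatz Lia.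
Open Scope R_scope.

(* Since f is quasi-convex, its sublevel sets are geodesically convex, and a
   proximal step x^k of x^(k-1) is the nearest point to x^(k-1) of the sublevel
   set {f <= f x^k}.  In a CAT(0)-space the nearest point z of a convex set C to
   a point w makes an obtuse angle: d(w,z)^2 + d(z,p)^2 <= d(w,p)^2 for p in C.
   Hence every point p of the curve after x^k (which lies in {f <= f x^k}, as
   f decreases along the curve) is at least as close to x^k as to any point of
   the segment [x^(k-1), x^k], and the CAT(0) inequality makes the distance to p
   nonincreasing along each segment.  Chaining segments gives
   self-contractedness. *)

Lemma pow2_le_reg a b : 0 <= a -> 0 <= b -> a ^ 2 <= b ^ 2 -> a <= b.
Proof. intros; nra. Qed.

Lemma le_sub_of_le_sub_scaled A B C :
  0 <= C -> (forall s, 0 < s < 1 -> A <= B - (1 - s) * C) -> A <= B - C.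
Proof.
  intros HC H. destruct (Rle_or_lt A (B - C)) as [h | h]; [exact h |].
  set (e := A - (B - C)). assert (He : 0 < e) by (unfold e; lra).
  set (s := e / (2 * (C + e))).
  assert (Hs2 : s * (2 * (C + e)) = e) by (unfold s; field; lra).
  assert (Hs : 0 < s < 1).
  { assert (0 < s) by (unfold s; apply Rdiv_lt_0_compat; lra). split; nra. }
  specialize (H s Hs). unfold e in *. nra.
Qed.

Section Geodesics.
Variables (X : Type) (d : X -> X -> R).
Hypothesis Hmet : is_metric d.

Lemma min_geodesic_dist_start x y g s :
  is_min_geodesic d x y g -> 0 <= s <= 1 -> d x (g s) = s * d x y.
Proof.
  intros [G0 [_ G]] Hs. rewrite <- G0 at 1.
  rewrite G by lra. rewrite Rabs_pos_eq by lra. ring.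
Qed.

Lemma min_geodesic_dist_end x y g s :
  is_min_geodesic d x y g -> 0 <= s <= 1 -> d (g s) y = (1 - s) * d x y.
Proof.
  intros [_ [G1 G]] Hs. rewrite <- G1 at 1.
  rewrite G by lra. rewrite Rabs_pos_eq by lra. ring.
Qed.

Lemma min_geodesic_dist_le x y g a b c :
  is_min_geodesic d x y g -> 0 <= a -> a <= b -> b <= c -> c <= 1 ->
  d (g b) (g c) <= d (g a) (g c).
Proof.
  destruct Hmet as [Hpos _]. intros [_ [_ G]] Ha Hab Hbc Hc.
  rewrite !G by lra. rewrite !Rabs_pos_eq by lra.
  pose proof (Hpos x y). nra.
Qed.

Lemma min_geodesic_tail x y g s :
  is_min_geodesic d x y g -> 0 <= s < 1 ->
  is_min_geodesic d (g s) y (fun r => g (s + r * (1 - s))).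
Proof.
  intros Hg Hs. pose proof Hg as [_ [G1 G]].
  split; [| split].
  - f_equal; ring.
  - rewrite <- G1. f_equal; ring.
  - intros a b Ha Hb. rewrite G by nra.
    rewrite (min_geodesic_dist_end x y g s Hg) by lra.
    replace (s + b * (1 - s) - (s + a * (1 - s))) with ((b - a) * (1 - s)) by ring.
    rewrite Rabs_mult, (Rabs_pos_eq (1 - s)) by lra. ring.
Qed.

Lemma min_geodesic_point_nearest x z y g a :
  is_min_geodesic d x z g -> 0 <= a <= 1 -> d x z <= d x y ->
  d (g a) z <= d (g a) y.
Proof.
  destruct Hmet as [_ [_ [_ Htri]]]. intros Hg Ha Hxy.
  rewrite (min_geodesic_dist_end x z g a Hg Ha).
  pose proof (min_geodesic_dist_start x z g a Hg Ha).
  pose proof (Htri x (g a) y). nra.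
Qed.

Hypothesis Hcat : is_CAT0 d.

Lemma CAT0_obtuse w z p gam :
  is_min_geodesic d z p gam -> (forall s, 0 < s < 1 -> d w z <= d w (gam s)) ->
  d w z ^ 2 + d z p ^ 2 <= d w p ^ 2.
Proof.
  destruct Hmet as [Hpos _]. destruct Hcat as [_ Hc].
  intros Hg H.
  enough (d w z ^ 2 <= d w p ^ 2 - d z p ^ 2) by lra.
  apply le_sub_of_le_sub_scaled; [pose proof (Hpos z p); nra |].
  intros s Hs.
  pose proof (pow_incr _ _ 2 (conj (Hpos w z) (H s Hs))) as Hnear.
  pose proof (Hc w z p gam Hg s ltac:(lra)) as Hcmp.
  apply (Rmult_le_reg_l s); [lra |]. nra.
Qed.

(* CAT(0) comparison on the tail geodesic from [g s1] to [v] bounds the squared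
   distance to [p] at [g s2] by a convex combination of its values at [g s1]
   and at [v], and the latter is the smaller one. *)
Lemma CAT0_dist_nonincreasing u v g p s1 s2 :
  is_min_geodesic d u v g -> (forall s, 0 <= s <= 1 -> d v p <= d (g s) p) ->
  0 <= s1 -> s1 <= s2 -> s2 <= 1 -> s1 < 1 -> d (g s2) p <= d (g s1) p.
Proof.
  destruct Hmet as [Hpos [_ [Hsym _]]]. destruct Hcat as [_ Hc].
  intros Hg Hv h1 h2 h3 h4.
  set (r := (s2 - s1) / (1 - s1)).
  assert (Hr2 : r * (1 - s1) = s2 - s1) by (unfold r; field; lra).
  assert (Hr : 0 <= r <= 1) by (split; nra).
  pose proof (Hc p _ _ _ (min_geodesic_tail u v g s1 Hg ltac:(lra)) r Hr) as C.
  cbv beta in C. replace (s1 + r * (1 - s1)) with s2 in C by lra.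
  rewrite (Hsym p (g s2)), (Hsym p (g s1)), (Hsym p v) in C.
  apply pow2_le_reg; [apply Hpos .. |].
  pose proof (pow_incr _ _ 2 (conj (Hpos v p) (Hv s1 ltac:(lra)))).
  pose proof (Hpos (g s1) v).
  assert (0 <= (1 - r) * r * d (g s1) v ^ 2)
    by (apply Rmult_le_pos; [nra | apply pow_le; auto]).
  nra.
Qed.

End Geodesics.

Section ProximalStep.
Variables (X : Type) (d : X -> X -> R) (f : X -> R).
Hypotheses (Hmet : is_metric d) (Hcat : is_CAT0 d) (Hqc : quasi_convex d f).

Lemma quasi_convex_sublevel z p gam s :
  is_min_geodesic d z p gam -> f p <= f z -> 0 < s < 1 -> f (gam s) <= f z.
Proof.
  intros Hg Hp Hs. eapply Rle_trans; [exact (Hqc z p gam Hg s Hs) |].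
  apply Rmax_lub; lra.
Qed.

Lemma in_J_value_le tau x z : 0 < tau -> in_J d f tau x z -> f z <= f x.
Proof.
  destruct Hmet as [_ [Hid _]]. intros Htau HJ.
  pose proof (HJ x) as H. rewrite (proj2 (Hid x x) eq_refl) in H.
  assert (0 <= d x z ^ 2 * / (2 * tau))
    by (apply Rmult_le_pos; [apply pow2_ge_0 | left; apply Rinv_0_lt_compat; lra]).
  unfold Rdiv in H. rewrite pow_i in H by lia. lra.
Qed.

Lemma in_J_nearest_in_sublevel tau x z y :
  0 < tau -> in_J d f tau x z -> f y <= f z -> d x z <= d x y.
Proof.
  destruct Hmet as [Hpos _]. intros Htau HJ Hy.
  apply pow2_le_reg; [apply Hpos .. |].
  apply (Rmult_le_reg_r (/ (2 * tau))); [apply Rinv_0_lt_compat; lra |].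
  pose proof (HJ y). unfold Rdiv in *. lra.
Qed.

Lemma in_J_dist_le_geodesic tau x z gam a p :
  0 < tau -> in_J d f tau x z -> is_min_geodesic d x z gam -> 0 <= a <= 1 ->
  f p <= f z -> d z p <= d (gam a) p.
Proof.
  intros Htau HJ Hg Ha Hp. pose proof Hmet as [Hpos _].
  destruct (proj1 Hcat z p) as [g2 Hg2].
  assert (Hobt : d (gam a) z ^ 2 + d z p ^ 2 <= d (gam a) p ^ 2).
  { apply (CAT0_obtuse X d Hmet Hcat _ _ _ g2 Hg2). intros s Hs.
    apply (min_geodesic_point_nearest X d Hmet x z _ gam a Hg Ha).
    apply (in_J_nearest_in_sublevel tau); auto.
    exact (quasi_convex_sublevel z p g2 s Hg2 Hp Hs). }
  apply pow2_le_reg; [apply Hpos .. |]. pose proof (Hpos (gam a) z). nra.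
Qed.

End ProximalStep.

(* A pair (j, s) with 0 <= s < 1 stands for the time T_j + s tau_(j+1) of the
   curve, i.e. for the point g (S j) s; [lex_le] is the order of these times. *)
Definition lex_le (j1 : nat) (s1 : R) (j2 : nat) (s2 : R) : Prop :=
  (j1 < j2)%nat \/ (j1 = j2 /\ s1 <= s2).

Section ProximalPolygon.
Variables (X : Type) (d : X -> X -> R) (f : X -> R).
Hypotheses (Hmet : is_metric d) (Hcat : is_CAT0 d) (Hqc : quasi_convex d f).
Variables (tau : nat -> R) (x : nat -> X) (g : nat -> R -> X).
Hypothesis tau_pos : forall j, 0 < tau (S j).
Hypothesis x_prox : forall j, in_J d f (tau (S j)) (x j) (x (S j)).
Hypothesis g_geod : forall j, is_min_geodesic d (x j) (x (S j)) (g (S j)).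

Lemma g_start j : g (S j) 0 = x j.
Proof. exact (proj1 (g_geod j)). Qed.

Lemma prox_value_nonincreasing i j : (i <= j)%nat -> f (x j) <= f (x i).
Proof.
  induction 1 as [| j _ IH]; [lra |].
  pose proof (in_J_value_le X d f Hmet _ _ _ (tau_pos j) (x_prox j)). lra.
Qed.

Lemma polygon_point_value_le m s : 0 <= s < 1 -> f (g (S m) s) <= f (x m).
Proof.
  intros Hs. destruct (Req_dec s 0) as [-> | Hs0]; [rewrite g_start; lra |].
  apply (quasi_convex_sublevel X d f Hqc _ _ _ _ (g_geod m)); [| lra].
  apply prox_value_nonincreasing; lia.
Qed.

Section TowardsSublevelPoint.
Variables (p : X) (m : nat).
Hypothesis p_sublevel : f p <= f (x m).

Lemma polygon_vertex_le_segment j s :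
  (j < m)%nat -> 0 <= s <= 1 -> d (x (S j)) p <= d (g (S j) s) p.
Proof.
  intros Hj Hs.
  apply (in_J_dist_le_geodesic X d f Hmet Hcat Hqc (tau (S j)) (x j)); auto.
  pose proof (prox_value_nonincreasing (S j) m Hj). lra.
Qed.

Lemma polygon_vertex_dist_le i j :
  (i <= j)%nat -> (j <= m)%nat -> d (x j) p <= d (x i) p.
Proof.
  induction 1 as [| j _ IH]; intros Hj; [lra |].
  pose proof (polygon_vertex_le_segment j 0 Hj ltac:(lra)) as H.
  rewrite g_start in H. specialize (IH ltac:(lia)). lra.
Qed.

Lemma polygon_segment_dist_le j s1 s2 :
  (j < m)%nat -> 0 <= s1 -> s1 <= s2 -> s2 <= 1 -> s1 < 1 ->
  d (g (S j) s2) p <= d (g (S j) s1) p.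
Proof.
  intros Hj. apply (CAT0_dist_nonincreasing X d Hmet Hcat _ _ _ _ _ _ (g_geod j)).
  intros s Hs. exact (polygon_vertex_le_segment j s Hj Hs).
Qed.

End TowardsSublevelPoint.

Section TowardsCurvePoint.
Variables (m : nat) (s3 : R).
Hypothesis s3_range : 0 <= s3 < 1.
Let p := g (S m) s3.

Lemma polygon_same_segment_dist_le j s1 s2 :
  (j <= m)%nat -> 0 <= s1 -> s1 <= s2 -> s2 < 1 -> (j = m -> s2 <= s3) ->
  d (g (S j) s2) p <= d (g (S j) s1) p.
Proof.
  intros Hj Hs1 Hs12 Hs2 Hlast. destruct (Nat.eq_dec j m) as [-> | Hjm].
  - apply (min_geodesic_dist_le X d Hmet _ _ _ _ _ _ (g_geod m)); auto; lra.
  - apply (polygon_segment_dist_le p m); auto; try lia; try lra.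
    exact (polygon_point_value_le m s3 s3_range).
Qed.

Lemma polygon_dist_le j1 s1 j2 s2 :
  0 <= s1 < 1 -> 0 <= s2 < 1 -> lex_le j1 s1 j2 s2 -> lex_le j2 s2 m s3 ->
  d (g (S j2) s2) p <= d (g (S j1) s1) p.
Proof.
  intros Hs1 Hs2 H12 H2m.
  assert (Hj2 : (j2 <= m)%nat) by (destruct H2m as [| []]; lia).
  assert (Hlast : j2 = m -> s2 <= s3) by (destruct H2m as [| []]; [lia | auto]).
  pose proof (polygon_point_value_le m s3 s3_range) as Hp.
  destruct H12 as [Hj12 | [<- Hs12]].
  - pose proof (polygon_same_segment_dist_le j2 0 s2 Hj2 ltac:(lra) ltac:(lra)
      ltac:(lra) Hlast) as Hseg.
    rewrite g_start in Hseg.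
    pose proof (polygon_vertex_dist_le p m Hp (S j1) j2 Hj12 Hj2).
    pose proof (polygon_vertex_le_segment p m Hp j1 s1 ltac:(lia) ltac:(lra)).
    lra.
  - apply polygon_same_segment_dist_le; auto; lra.
Qed.

End TowardsCurvePoint.

End ProximalPolygon.

Section Reparametrization.
Variable tau : nat -> R.
Hypothesis tau_pos : forall j, 0 < tau (S j).

Let segment_param j t := (t - Tsum tau j) / tau (S j).

Lemma Tsum_le i j : (i <= j)%nat -> Tsum tau i <= Tsum tau j.
Proof.
  induction 1 as [| j _ IH]; [lra |]. simpl. pose proof (tau_pos j). lra.
Qed.

Lemma Tsum_segment_exists t K :
  0 <= t -> t < Tsum tau K -> exists j, Tsum tau j <= t < Tsum tau (S j).
Proof.
  intros Ht. induction K as [| K IH]; simpl; intros HK; [lra |].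
  destruct (Rlt_or_le t (Tsum tau K)); [auto | exists K; simpl; lra].
Qed.

Lemma segment_param_range j t :
  Tsum tau j <= t < Tsum tau (S j) -> 0 <= segment_param j t < 1.
Proof.
  simpl. intros Ht. pose proof (tau_pos j).
  assert (E : segment_param j t * tau (S j) = t - Tsum tau j)
    by (unfold segment_param; field; lra).
  split; nra.
Qed.

Lemma segment_param_lex_le j1 t1 j2 t2 :
  Tsum tau j1 <= t1 < Tsum tau (S j1) -> Tsum tau j2 <= t2 < Tsum tau (S j2) ->
  t1 <= t2 -> lex_le j1 (segment_param j1 t1) j2 (segment_param j2 t2).
Proof.
  intros H1 H2 Ht. destruct (Nat.lt_total j1 j2) as [Hlt | [-> | Hgt]].
  - left. exact Hlt.
  - right. split; [reflexivity |]. unfold segment_param.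
    apply Rmult_le_compat_r; [left; apply Rinv_0_lt_compat, tau_pos | lra].
  - pose proof (Tsum_le (S j2) j1 Hgt). lra.
Qed.

End Reparametrization.

Theorem mainTheorem12 (X : Type) (d : X -> X -> R)
  (Hmet : is_metric d) (Hcat : is_CAT0 d) (Hcomp : is_complete d)
  (f : X -> R) (Hlsc : lower_semicontinuous d f) (Hqc : quasi_convex d f)
  (x0 : X) (tau : nat -> R) (Htau : forall k, (1 <= k)%nat -> 0 < tau k)
  (x : nat -> X) (Hx0 : x 0%nat = x0)
  (HxJ : forall k, (1 <= k)%nat -> in_J d f (tau k) (x (k - 1)%nat) (x k))
  (g : nat -> R -> X)
  (Hg : forall k, (1 <= k)%nat -> is_min_geodesic d (x (k - 1)%nat) (x k) (g k))
  (xi : R -> X)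
  (Hxi : forall k t, (1 <= k)%nat ->
     Tsum tau (k - 1) <= t < Tsum tau k ->
     xi t = g k ((t - Tsum tau (k - 1)) / tau k)) :
  (forall k l m, (k < l)%nat -> (l < m)%nat -> d (x l) (x m) <= d (x k) (x m)) /\
  self_contracted d tau xi.
Proof.
  (* Completeness and lower semicontinuity only guarantee that the proximal
     sequence exists, which is assumed here. *)
  assert (tau_pos : forall j, 0 < tau (S j)) by (intro j; apply Htau; lia).
  assert (x_prox : forall j, in_J d f (tau (S j)) (x j) (x (S j))).
  { intro j. pose proof (HxJ (S j) ltac:(lia)) as H. rewrite Nat.sub_1_r in H. exact H. }
  assert (g_geod : forall j, is_min_geodesic d (x j) (x (S j)) (g (S j))).
  { intro j. pose proof (Hg (S j) ltac:(lia)) as H. rewrite Nat.sub_1_r in H. exact H. }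
  assert (xi_seg : forall j t, Tsum tau j <= t < Tsum tau (S j) ->
            xi t = g (S j) ((t - Tsum tau j) / tau (S j))).
  { intros j t. pose proof (Hxi (S j) t ltac:(lia)) as H. rewrite Nat.sub_1_r in H. exact H. }
  split.
  - intros k l m Hkl Hlm.
    apply (polygon_vertex_dist_le X d f Hmet Hcat Hqc tau x g tau_pos x_prox g_geod
             (x m) m); [lra | lia | lia].
  - intros t1 t2 t3 H1 H12 H23 [H3 [K HK]].
    destruct (Tsum_segment_exists tau t3 K H3 HK) as [j3 S3].
    destruct (Tsum_segment_exists tau t2 K ltac:(lra) ltac:(lra)) as [j2 S2].
    destruct (Tsum_segment_exists tau t1 K ltac:(lra) ltac:(lra)) as [j1 S1].
    rewrite (xi_seg _ _ S1), (xi_seg _ _ S2), (xi_seg _ _ S3).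
    apply (polygon_dist_le X d f Hmet Hcat Hqc tau x g tau_pos x_prox g_geod);
      try apply segment_param_range; try apply segment_param_lex_le; auto.
Qed.
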